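(* A standard playable enriched $Ł_n$-frame $\mathfrak F$ is truly playable if and only if the formula $[\varnothing]\phi\leftrightarrow[\mathcal O]\phi$ is valid in $\mathfrak F$ for every $\phi\in\mathsf{Form}_{\mathcal L^+}$.
   Context: $Ł_n=\{0,\frac1n,\dots,1\}$ with $\neg x=1-x$, $x\oplus y=\min(x+y,1)$, $x\odot y=\max(x+y-1,0)$, $x\to y=\min(1,1-x+y)$, $\wedge=\min$, applied pointwise; $0,1$ also constant functions; $\chi_Y$ is the characteristic function of $Y$. $N$ finite set of players, $|N|\ge2$. An $Ł_n$-valued effectivity function on a set $S$ is $E:\mathcal P N\times Ł_n^S\to Ł_n$. It is: outcome monotonic if $f\ge g$ implies $E(C,f)\ge E(C,g)$; $N$-maximal if $\neg E(\varnothing,\neg f)\le E(N,f)$; superadditive if $E(C_1,f)\wedge E(C_2,g)\le E(C_1\cup C_2,f\wedge g)$ whenever $C_1\cap C_2=\varnothing$; homogeneous if $E(C,f\oplus f)=E(C,f)\oplus E(C,f)$ and $E(C,f\odot f)=E(C,f)\odot E(C,f)$; has liveness if $E(C,1)=1$; has safety if $E(C,0)=0$; principal if there is $g$ with $\{f\mid E(\varnothing,f)=1\}=\{f\mid f\ge g\odot\cdots\odot g\ (n\text{ factors})\}$. Playable: first six; truly playable: playable and principal. Formulas of $\mathcal L^+$: $\phi::=1\mid p\mid\phi\to\phi\mid\neg\phi\mid[C]\phi\mid[\mathcal O]\phi$ ($p$ in a countably infinite set $\mathsf{Prop}$, $C\subseteq N$); $\phi\leftrightarrow\psi=(\phi\to\psi)\odot(\psi\to\phi)$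 with $\phi\odot\psi=\neg(\phi\to\neg\psi)$. An enriched $Ł_n$-frame is $(S,E,R)$ with $S\ne\varnothing$, $E(u)$ an $Ł_n$-valued effectivity function on $S$ for each $u\in S$, and $R\subseteq S\times S$; it is standard if $R=\{(u,v)\mid E(u)(\varnothing,\neg\chi_{\{v\}})=0\}$, and (truly) playable if every $E(u)$ is. A model on it adds $\mathrm{Val}:S\times\mathsf{Prop}\to Ł_n$ extended by the Łukasiewicz operations on $1,\neg,\to$, $\mathrm{Val}(u,[C]\phi)=E(u)(C,\mathrm{Val}(-,\phi))$ and $\mathrm{Val}(u,[\mathcal O]\phi)=\min\{\mathrm{Val}(v,\phi)\mid(u,v)\in R\}$ (minimum of the empty set being $1$). A formula is valid in a frame if its value is $1$ at every state of every model based on the frame. *)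

From Stdlib Require Import ClassicalEpsilon.
From mathcomp Require Import all_boot.
Set Implicit Arguments. Unset Strict Implicit. Unset Printing Implicit Defensive.

Definition pbool (P : Prop) : bool :=
  if excluded_middle_informative P then true else false.

Section Luk.
Variable n : nat.
(* The value k/n of Ł_n is encoded by the ordinal k : 'I_n.+1. *)
Definition L := 'I_n.+1.
Definition ltop : L := ord_max.
Definition lbot : L := ord0.
Definition lneg (x : L) : L := inord (n - x).
Definition loplus (x y : L) : L := inord (minn (x + y) n).
Definition lodot (x y : L) : L := inord ((x + y) - n).
Definition limp (x y : L) : L := inord (minn n (n - x + y)).
Definition lmin (x y : L) : L := inord (minn x y).
Definition lpow_n (x : L) : L := iter n.-1 (lodot x) x.

Section EffFun.
Variables (N : finType) (S : Type).
Definition effun := {set N} -> (S -> L) -> L.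
Definition chi (Y : S -> Prop) : S -> L := fun s => if pbool (Y s) then ltop else lbot.

Variable E : effun.
Definition outcome_monotonic : Prop :=
  forall C (f g : S -> L), (forall s, (g s <= f s)%N) -> (E C g <= E C f)%N.
Definition N_maximal : Prop :=
  forall f : S -> L, (lneg (E set0 (fun s => lneg (f s))) <= E setT f)%N.
Definition superadditive : Prop :=
  forall (C1 C2 : {set N}) (f g : S -> L), [disjoint C1 & C2] ->
    (minn (E C1 f) (E C2 g) <= E (C1 :|: C2) (fun s => lmin (f s) (g s)))%N.
Definition homogeneous : Prop :=
  forall C (f : S -> L),
    E C (fun s => loplus (f s) (f s)) = loplus (E C f) (E C f) /\
    E C (fun s => lodot (f s) (f s)) = lodot (E C f) (E C f).
Definition liveness : Prop := forall C, E C (fun _ => ltop) = ltop.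
Definition safety : Prop := forall C, E C (fun _ => lbot) = lbot.
Definition principal : Prop :=
  exists g : S -> L, forall f : S -> L,
    E set0 f = ltop <-> (forall s, (lpow_n (g s) <= f s)%N).
Definition playable : Prop :=
  outcome_monotonic /\ N_maximal /\ superadditive /\ homogeneous /\ liveness /\ safety.
Definition truly_playable : Prop := playable /\ principal.
End EffFun.

Definition standard (N : finType) (S : Type) (E : S -> effun N S) (R : S -> S -> Prop) :=
  forall u v, R u v <-> E u set0 (fun s => lneg (chi (fun w => w = v) s)) = lbot.

(* min { f v | R u v }, with min of the empty set = 1 *)
Definition boxO (S : Type) (R : S -> S -> Prop) (f : S -> L) (u : S) : L :=
  inord (\max_(k : 'I_n.+1 | pbool (forall v, R u v -> (k <= f v)%N)) k).
End Luk.

Inductive form (N : finType) : Type :=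
| FTop : form N
| FVar : nat -> form N
| FImp : form N -> form N -> form N
| FNeg : form N -> form N
| FBox : {set N} -> form N -> form N
| FBoxO : form N -> form N.

Definition FOdot (N : finType) (a b : form N) : form N := FNeg (FImp a (FNeg b)).
Definition FIff (N : finType) (a b : form N) : form N := FOdot (FImp a b) (FImp b a).

Fixpoint eval (n : nat) (N : finType) (S : Type) (E : S -> effun n N S)
  (R : S -> S -> Prop) (V : S -> nat -> L n) (phi : form N) : S -> L n :=
  match phi with
  | FTop => fun _ => ltop n
  | FVar p => fun u => V u p
  | FImp a b => fun u => limp (eval E R V a u) (eval E R V b u)
  | FNeg a => fun u => lneg (eval E R V a u)
  | FBox C a => fun u => E u C (eval E R V a)
  | FBoxO a => boxO R (eval E R V a)
  end.

Definition valid_in (n : nat) (N : finType) (S : Type) (E : S -> effun n N S)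
  (R : S -> S -> Prop) (phi : form N) : Prop :=
  forall (V : S -> nat -> L n) (u : S), eval E R V phi u = ltop n.

From Stdlib Require Import ClassicalEpsilon.
From mathcomp Require Import all_boot zify.
Set Implicit Arguments. Unset Strict Implicit.

(* If E(u) is homogeneous, it commutes with every term built from x ⊕ x and
   x ⊙ x; suitable such terms send x to 1 exactly when x ≥ k/n and to 0
   otherwise.  Hence a homogeneous E(u)(∅, -) with generator g satisfies
   E(u)(∅, f) ≥ k/n iff f ≥ k/n wherever g = 1, i.e. E(u)(∅, f) is the minimum
   of f over {v | g v = 1}.  In a standard frame this set is exactly the set of
   R-successors of u, which gives [∅]φ = [O]φ.  Conversely, validity of
   [∅]p ↔ [O]p makes E(u)(∅, -) = [O](-), which is principal with
   generator the characteristic function of the R-successors of u. *)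

Lemma pboolP (P : Prop) : reflect P (pbool P).
Proof. by rewrite /pbool; case: excluded_middle_informative => h; constructor. Qed.

Section Lukasiewicz.
Variable n : nat.
Implicit Types x y : L n.

Lemma leq_Ln x : x <= n.
Proof. by rewrite -ltnS ltn_ord. Qed.

Lemma val_lneg x : lneg x = n - x :> nat.
Proof. by rewrite /lneg inordK // ltnS leq_subr. Qed.

Lemma val_loplus x y : loplus x y = minn (x + y) n :> nat.
Proof. by rewrite /loplus inordK // ltnS geq_minr. Qed.

Lemma val_lodot x y : lodot x y = x + y - n :> nat.
Proof. by rewrite /lodot inordK // ltnS; have := leq_Ln x; have := leq_Ln y; lia. Qed.

Lemma val_limp x y : limp x y = minn n (n - x + y) :> nat.
Proof. by rewrite /limp inordK // ltnS geq_minl. Qed.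

Lemma eq_ltop x : (x == ltop n) = (x == n :> nat).
Proof. by []. Qed.

Lemma ltop_geP x : x = ltop n <-> n <= x.
Proof. by split=> [-> // | ?]; apply: val_inj; apply/eqP; rewrite eqn_leq leq_Ln. Qed.

Lemma lbot_ltop : 0 < n -> lbot n != ltop n.
Proof. by rewrite eq_ltop /= eq_sym -lt0n. Qed.

Lemma liff_eq_ltop x y : lneg (limp (limp x y) (lneg (limp y x))) = ltop n <-> x = y.
Proof.
split=> [eq_top | ->]; apply: val_inj.
  move: (congr1 (@nat_of_ord _) eq_top) (leq_Ln x) (leq_Ln y).
  by rewrite /= !(val_lneg, val_limp) /=; lia.
by rewrite /= !(val_lneg, val_limp) /=; have := leq_Ln y; lia.
Qed.

Lemma lpow_n_ltop : lpow_n (ltop n) = ltop n.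
Proof.
rewrite /lpow_n; elim: n.-1 => //= j ->.
by apply: val_inj; rewrite /= val_lodot /=; lia.
Qed.

(* Each factor of x ⊙ ... ⊙ x below 1 loses at least 1/n. *)
Lemma lpow_n_lt_ltop x : 0 < n -> x != ltop n -> lpow_n x = lbot n.
Proof.
rewrite eq_ltop => n_gt0 /negbTE x_neq; have x_lt : x < n by rewrite ltn_neqAle x_neq leq_Ln.
suff: (lpow_n x : nat) <= x - n.-1 by move=> ?; apply: val_inj => /=; lia.
rewrite /lpow_n; elim: n.-1 => [|j IH] /=; first by rewrite subn0.
by rewrite val_lodot; lia.
Qed.

(* [dyadic_term m c] evaluates a chain of m doublings x ⊕ x / x ⊙ x chosen by
   the binary digits of c; its value is min(2^m x - c, 1) in units of 1/n. *)
Fixpoint dyadic_term (m c : nat) x : L n :=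
  if m is m'.+1 then
    let y := dyadic_term m' c./2 x in if odd c then lodot y y else loplus y y
  else x.

Lemma val_dyadic_term m c x :
  c < 2 ^ m -> dyadic_term m c x = minn (2 ^ m * x - c * n) n :> nat.
Proof.
elim: m c => [|m IH] c /=.
  by rewrite expn0 ltnS leqn0 => /eqP ->; have := leq_Ln x; lia.
rewrite expnS => c_lt.
have c2_lt : c./2 < 2 ^ m by have := odd_double_half c; lia.
have cn : c * n = odd c * n + 2 * (c./2 * n).
  by rewrite -{1}(odd_double_half c) mulnDl -mul2n mulnA.
rewrite cn -mulnA; move: (IH _ c2_lt) (leq_Ln (dyadic_term m c./2 x)).
set P := 2 ^ m * x; set Q := c./2 * n.
by case: (odd c) => /=; rewrite ?val_lodot ?val_loplus; lia.
Qed.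

(* The witness: c + 1 = ⌊k 2^n / n⌋, so that (c + 1) n ≤ 2^n x iff k ≤ x,
   because 2^n > n. *)
Lemma exists_dyadic_threshold k : 0 < n -> 0 < k <= n ->
  exists m c, c < 2 ^ m /\ forall x, (dyadic_term m c x == ltop n) = (k <= x).
Proof.
move=> n_gt0 /andP[k_gt0 k_le].
have n_lt : n < 2 ^ n := ltn_expl n (ltnSn 1).
set q := k * 2 ^ n %/ n.
have q_le : q * n <= k * 2 ^ n := leq_divM _ n.
have q_gt : k * 2 ^ n < q.+1 * n := ltn_ceil _ n_gt0.
have q_gt0 : 0 < q.
  by rewrite divn_gt0 //; apply: leq_trans (ltnW n_lt) _; rewrite leq_pmull.
have q_bound : q * n <= 2 ^ n * n.
  by apply: leq_trans q_le _; rewrite mulnC leq_mul2l k_le orbT.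
have c_lt : q.-1 < 2 ^ n by move: q_bound; rewrite leq_mul2r; case/orP; lia.
have qn : q.-1 * n = q * n - n by rewrite -subn1 mulnBl mul1n.
have n_le : n <= q * n by rewrite leq_pmull.
exists n, q.-1; split=> // x; rewrite eq_ltop val_dyadic_term // qn.
move: q_le q_gt n_lt; set T := 2 ^ n => q_le q_gt n_lt.
have [kx | xk] := leqP k x.
  have : q * n <= T * x by apply: leq_trans q_le _; rewrite mulnC leq_mul2l kx orbT.
  by lia.
have : T * x.+1 <= T * k by rewrite leq_mul2l xk orbT.
by rewrite mulnS; move: q_gt; rewrite mulSn mulnC; lia.
Qed.

Section HomogeneousPrincipal.
Variables (S : Type) (F : (S -> L n) -> L n) (g : S -> L n).
Hypothesis F_oplus : forall f, F (fun s => loplus (f s) (f s)) = loplus (F f) (F f).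
Hypothesis F_odot : forall f, F (fun s => lodot (f s) (f s)) = lodot (F f) (F f).
Hypothesis F_principal : forall f, F f = ltop n <-> (forall s, lpow_n (g s) <= f s).
Hypothesis n_gt0 : 0 < n.

Lemma F_dyadic_term m c f : F (fun s => dyadic_term m c (f s)) = dyadic_term m c (F f).
Proof.
elim: m c => //= m IH c.
by case: (odd c); rewrite -IH ?F_odot ?F_oplus.
Qed.

Lemma F_ltopP f : F f = ltop n <-> (forall s, g s = ltop n -> f s = ltop n).
Proof.
rewrite F_principal; split=> fP s.
  by move=> gs; apply/ltop_geP; move: (fP s); rewrite gs lpow_n_ltop.
have [gs | gs] := eqVneq (g s) (ltop n); first by rewrite gs (fP s gs) lpow_n_ltop.
by rewrite lpow_n_lt_ltop.
Qed.

Lemma F_geP f k : k <= n -> (k <= F f <-> forall s, g s = ltop n -> k <= f s).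
Proof.
move=> k_le; have [-> // | k_gt0] := posnP k.
have [m [c [_ thr]]] := exists_dyadic_threshold n_gt0 (introT andP (conj k_gt0 k_le)).
rewrite -thr -F_dyadic_term; split.
  by move/eqP/F_ltopP => fP s gs; rewrite -thr; apply/eqP/fP.
by move=> fP; apply/eqP/F_ltopP => s gs; apply/eqP; rewrite thr fP.
Qed.

End HomogeneousPrincipal.

Lemma boxO_geP (S : Type) (R : S -> S -> Prop) (f : S -> L n) u k : k <= n ->
  (k <= boxO R f u <-> forall v, R u v -> k <= f v).
Proof.
move=> k_le; rewrite /boxO inordK; last first.
  by rewrite ltnS; apply/bigmax_leqP => i _; exact: leq_Ln.
split=> [le_max v Ruv | fP].
  by apply: leq_trans le_max _; apply/bigmax_leqP => i /pboolP; apply.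
by apply: (bigmax_sup (Ordinal (k_le : k < n.+1))) => //; apply/pboolP.
Qed.

Lemma boxO_ltopP (S : Type) (R : S -> S -> Prop) (f : S -> L n) u :
  boxO R f u = ltop n <-> (forall v, R u v -> f v = ltop n).
Proof.
by rewrite ltop_geP boxO_geP //; split=> fP v /fP /ltop_geP.
Qed.

Lemma eq_boxO_geP (S : Type) (R : S -> S -> Prop) (f : S -> L n) u (x : L n) :
  (forall k, k <= n -> (k <= x <-> forall v, R u v -> k <= f v)) -> x = boxO R f u.
Proof.
move=> xP; apply: val_inj; apply/eqP; rewrite eqn_leq; apply/andP; split.
  by apply/boxO_geP; [exact: leq_Ln | apply/(xP _ (leq_Ln _))].
by apply/(xP _ (leq_Ln _)); apply/boxO_geP; first exact: leq_Ln.
Qed.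

Lemma boxO_principal (S : Type) (R : S -> S -> Prop) u : 0 < n -> exists g : S -> L n,
  forall f, boxO R f u = ltop n <-> (forall s, lpow_n (g s) <= f s).
Proof.
move=> n_gt0; exists (chi n (R u)) => f; rewrite boxO_ltopP /chi.
split=> fP s.
  case: pboolP => Rus; first by rewrite lpow_n_ltop fP.
  by rewrite lpow_n_lt_ltop ?lbot_ltop.
by move=> Rus; apply/ltop_geP; move: (fP s); case: pboolP => // _; rewrite lpow_n_ltop.
Qed.

End Lukasiewicz.

Section Frame.
Variables (n : nat) (N : finType) (S : Type).
Variables (E : S -> effun n N S) (R : S -> S -> Prop).
Hypothesis n_gt0 : 0 < n.
Hypothesis E_std : standard E R.

(* The successors of u are the points where the generator of E(u)(∅, -) is 1:
   test E(u)(∅, -) on the complement ¬χ_{v} of a point. *)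
Lemma standard_generator u (g : S -> L n) :
  homogeneous (E u) -> (forall f, E u set0 f = ltop n <-> (forall s, lpow_n (g s) <= f s)) ->
  forall v, R u v <-> g v = ltop n.
Proof.
move=> Ehom Eg v.
have geP := F_geP (fun f => (Ehom set0 f).1) (fun f => (Ehom set0 f).2) Eg n_gt0.
have not_v_geP s : 1 <= lneg (chi n (fun w => w = v) s) <-> s <> v.
  by rewrite val_lneg /chi; case: pboolP => /= [-> | ?]; rewrite ?subnn ?subn0.
rewrite E_std; split => [E_bot | gv].
  apply/eqP/negP => /negP gv.
  suff : 1 <= E u set0 (fun s => lneg (chi n (fun w => w = v) s)) by rewrite E_bot.
  by apply/geP => // s gs; apply/not_v_geP => sv; rewrite -sv gs eqxx in gv.
apply: val_inj; apply/eqP; rewrite /= -leqn0 leqNgt; apply/negP => /geP.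
by move=> /(_ n_gt0 v gv) /not_v_geP.
Qed.

Lemma truly_playable_boxO u f :
  truly_playable (E u) -> E u set0 f = boxO R f u.
Proof.
move=> [[_ [_ [_ [Ehom _]]]] [g Eg]].
have geP := F_geP (fun f => (Ehom set0 f).1) (fun f => (Ehom set0 f).2) Eg n_gt0.
apply: eq_boxO_geP => k k_le; rewrite geP //.
by split=> fP v; move/(standard_generator Ehom Eg) => /fP.
Qed.

End Frame.

Theorem mainTheorem14 (N : finType) (hN : 1 < #|N|) (n : nat) (hn : 0 < n)
  (S : Type) (hS : inhabited S) (E : S -> effun n N S) (R : S -> S -> Prop)
  (hstd : standard E R) (hplay : forall u, playable (E u)) :
  (forall u, truly_playable (E u)) <->
  (forall phi : form N, valid_in E R (FIff (FBox set0 phi) (FBoxO phi))).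
Proof.
split=> [E_tp phi V u | valid u].
  by apply/liff_eq_ltop; apply: truly_playable_boxO.
have E_boxO f : E u set0 f = boxO R f u.
  by apply/liff_eq_ltop; exact: (valid (FVar N 0) (fun s _ => f s) u).
split; first exact: hplay.
have [g gP] := boxO_principal R u hn.
by exists g => f; rewrite E_boxO.
Qed.
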